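(* Let $L$ be a rotational virtual link diagram. Then $L$ bounds a rotational virtual surface if and only if $L$ has an even number of virtual crossings.
   Context: A virtual link diagram is a diagram in the plane with classical crossings (over/under) and virtual crossings (drawn encircled). Rotational virtual equivalence is the equivalence relation on such diagrams generated by planar isotopy, the classical Reidemeister moves, and the virtual moves (virtual second and third Reidemeister moves, and the mixed move in which a strand with two virtual crossings passes over or under a classical crossing), but NOT the virtual first Reidemeister move (a virtual curl may not be added or removed); equivalently the detour move is restricted so that arcs with only virtual crossings are moved by regular homotopy in the plane (so, e.g., two opposite virtual curls can be created or cancelled via the Whitney trick, but a single one cannot). A free circle is a closed curve with no crossings (in particular no virtual crossings). Rotational virtual cobordism is the equivalence generated by rotational virtual equivalence, births (introducing an isolated free circle), deaths (removing an isolated free circle) and oriented saddle moves (bringing two oppositely oriented arcs together and resmoothing them into two new oppositely oriented arcs). $L$ bounds a rotational virtual surface if there is a sequence of such moves starting at $L$ and ending at the empty diagram. *)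

(* Combinatorial model of virtual link diagrams in
   the plane: a diagram is a Morse-position word of elementary horizontal
   slices (cups, caps, classical crossings, virtual crossings), read bottom
   to top.  Planar isotopy is generated by the standard (Turaev-style)
   relations: far commutativity of slices, zigzag cancellation, and rotation
   of crossings by cups/caps. *)
From Stdlib Require Import Relations.
From mathcomp Require Import all_boot.

Set Implicit Arguments.
Unset Strict Implicit.
Unset Printing Implicit Defensive.

(* A point on a horizontal level carries an orientation:
   true = the strand crosses the level going upward, false = downward. *)

(* Cr k o1 o2 : classical crossing; input orientations [o1; o2], output
             [o2; o1]; the strand going bottom-left -> top-right (orientation
             o1) passes over iff k. *)
Inductive gen : Type :=
| Cup of bool
| Cap of bool
| Cr of bool & bool & bool
| VCr of bool & bool.

Definition gin (g : gen) : seq bool :=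
  match g with
  | Cup _ => [::]
  | Cap b => [:: b; ~~ b]
  | Cr _ o1 o2 => [:: o1; o2]
  | VCr o1 o2 => [:: o1; o2]
  end.

Definition gout (g : gen) : seq bool :=
  match g with
  | Cup b => [:: b; ~~ b]
  | Cap _ => [::]
  | Cr _ o1 o2 => [:: o2; o1]
  | VCr o1 o2 => [:: o2; o1]
  end.

(* a slice: generator acting at horizontal position i (leftmost point used) *)
Definition slice := (gen * nat)%type.

Definition apply_slice (w : seq bool) (s : slice) : option (seq bool) :=
  let: (g, i) := s in
  if (i + size (gin g) <= size w) && (take (size (gin g)) (drop i w) == gin g)
  then Some (take i w ++ gout g ++ drop (i + size (gin g)) w)
  else None.

Fixpoint run (w : seq bool) (d : seq slice) : option (seq bool) :=
  match d with
  | [::] => Some w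
  | s :: d' => if apply_slice w s is Some w' then run w' d' else None
  end.

Definition diagram := seq slice.
Definition valid (d : diagram) : Prop := run [::] d = Some [::].

Definition is_virtual (s : slice) : bool :=
  if s.1 is VCr _ _ then true else false.
Definition count_virtual (d : diagram) : nat := count is_virtual d.

Definition shift (k : nat) (u : diagram) : diagram :=
  [seq (s.1, s.2 + k) | s <- u].

Inductive isotopy_rule : diagram -> diagram -> Prop :=
| IR_interchange g h i j : i + size (gout g) <= j ->
    isotopy_rule [:: (g, i); (h, j)]
                 [:: (h, j + size (gin g) - size (gout g)); (g, i)]
| IR_zigzag_l b : isotopy_rule [:: (Cup b, 1); (Cap (~~ b), 0)] [::]
| IR_zigzag_r b : isotopy_rule [:: (Cup b, 0); (Cap (~~ b), 1)] [::]
| IR_rot_cr_l k a b :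
    isotopy_rule [:: (Cup b, 2); (Cr k a b, 1); (Cap (~~ b), 0)]
                 [:: (Cr (~~ k) (~~ b) a, 0)]
| IR_rot_cr_r k a b :
    isotopy_rule [:: (Cup b, 0); (Cr k (~~ b) a, 1); (Cap (~~ b), 2)]
                 [:: (Cr (~~ k) a b, 0)]
| IR_rot_vcr_l a b :
    isotopy_rule [:: (Cup b, 2); (VCr a b, 1); (Cap (~~ b), 0)]
                 [:: (VCr (~~ b) a, 0)]
| IR_rot_vcr_r a b :
    isotopy_rule [:: (Cup b, 0); (VCr (~~ b) a, 1); (Cap (~~ b), 2)]
                 [:: (VCr a b, 0)].

Inductive xkind : Type := Classical of bool | Virtual.

Definition mkX (t : xkind) (o1 o2 : bool) : gen :=
  match t with Classical k => Cr k o1 o2 | Virtual => VCr o1 o2 end.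

(* t1 : crossing of A,B ; t2 : crossing of A,C ; t3 : crossing of B,C.
   Allowed: classical R3 (over/under induced by heights of the strands),
   virtual R3, and the mixed move (exactly one classical crossing). *)
Definition tri_ok (t1 t2 t3 : xkind) : Prop :=
  match t1, t2, t3 with
  | Classical k1, Classical k2, Classical k3 =>
      exists hA hB hC : nat,
        [/\ uniq [:: hA; hB; hC],
            k1 = (hB < hA), k2 = (hC < hA) & k3 = (hC < hB)]
  | Virtual, Virtual, Virtual => True
  | Classical _, Virtual, Virtual => True
  | Virtual, Classical _, Virtual => True
  | Virtual, Virtual, Classical _ => True
  | _, _, _ => False
  end.

(* ---- Reidemeister moves and virtual moves (no virtual R1) ---- *)
Inductive rv_rule : diagram -> diagram -> Prop :=
| RV_iso u v : isotopy_rule u v -> rv_rule u v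
| RV_R1_r k x : rv_rule [:: (Cup x, 1); (Cr k x x, 0); (Cap x, 1)] [::]
| RV_R1_l k x : rv_rule [:: (Cup (~~ x), 0); (Cr k x x, 1); (Cap (~~ x), 0)] [::]
| RV_R2 k a b : rv_rule [:: (Cr k a b, 0); (Cr (~~ k) b a, 0)] [::]
| RV_vR2 a b : rv_rule [:: (VCr a b, 0); (VCr b a, 0)] [::]
| RV_tri t1 t2 t3 a b c : tri_ok t1 t2 t3 ->
    rv_rule [:: (mkX t1 a b, 0); (mkX t2 a c, 1); (mkX t3 b c, 0)]
            [:: (mkX t3 b c, 1); (mkX t2 a c, 0); (mkX t1 a b, 1)].

Inductive cob_rule : diagram -> diagram -> Prop :=
| CB_rv u v : rv_rule u v -> cob_rule u v
| CB_birth b : cob_rule [::] [:: (Cup b, 0); (Cap b, 0)]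
| CB_saddle b : cob_rule [::] [:: (Cap b, 0); (Cup b, 0)].

Definition step (R : diagram -> diagram -> Prop) (d d' : diagram) : Prop :=
  valid d /\ valid d' /\
  exists (p s u v : diagram) (k : nat),
    R u v /\ d = p ++ shift k u ++ s /\ d' = p ++ shift k v ++ s.

Definition rv_equiv (d d' : diagram) : Prop :=
  clos_refl_sym_trans diagram (step rv_rule) d d'.

Definition rv_cobordant (d d' : diagram) : Prop :=
  clos_refl_sym_trans diagram (step cob_rule) d d'.

Definition bounds_rv_surface (L : diagram) : Prop := rv_cobordant L [::].

From mathcomp Require Import all_boot zify.
From Stdlib Require Import Relations.

Set Implicit Arguments.
Unset Strict Implicit.
Unset Printing Implicit Defensive.

(* One direction: every move, births, deaths and saddles included, preserves
   the number of virtual crossings mod 2.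

   Conversely, read a diagram as a word of Morse slices and close every prefix
   off by caps.  By induction on the prefix, a capped prefix is cobordant to a
   single virtual curl or to nothing, according to the parity of its virtual
   crossings.  Appending a slice splits, by saddles, into the capped prefix and
   the new slice closed up by caps above and below; the choice of capping does
   not matter, since any two cappings of one level are cobordant (compare
   their first caps: equal or adjacent caps cancel, disjoint ones commute).  A
   closed-up crossing is a curl: a classical curl dies by R1, a virtual curl
   can be pulled out of the circles around it, and two virtual curls cancel.
   A single virtual curl cannot be removed, because virtual R1 is not
   allowed.  Crossings of parallel strands are first rotated into
   antiparallel ones. *)

(** * Running words of slices *)

Lemma apply_sliceP w g i w' :
  apply_slice w (g, i) = Some w' <->
  exists x y, [/\ size x = i, w = x ++ gin g ++ y & w' = x ++ gout g ++ y].
Proof.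
rewrite /apply_slice; split.
  case: ifP => // /andP [Hs /eqP Ht] [<-].
  exists (take i w), (drop (i + size (gin g)) w); split => //.
    by rewrite size_take; case: ltnP => //; lia.
  by rewrite -[in LHS](cat_take_drop i w) -[drop i w](cat_take_drop (size (gin g)))
             Ht drop_drop addnC.
case=> x [y [Hx -> ->]].
rewrite !size_cat -Hx leq_add2l leq_addr /= drop_size_cat // take_size_cat // eqxx.
by rewrite take_size_cat // addnC -drop_drop !drop_size_cat.
Qed.

Arguments apply_slice : simpl never.

Lemma cup_cap w b i w' :
  apply_slice w (Cup b, i) = Some w' <-> apply_slice w' (Cap b, i) = Some w.
Proof. by split=> /apply_sliceP [x [y [H -> ->]]]; apply/apply_sliceP; exists x, y. Qed.

Lemma cat_eq_cat_leq (T : eqType) (a b c d : seq T) :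
  a ++ b = c ++ d -> size a <= size c -> exists u, c = a ++ u /\ b = u ++ d.
Proof.
move=> E le_ac; exists (drop (size a) c).
have Ec : c = a ++ drop (size a) c.
  have := congr1 (take (size a)) E.
  rewrite take_size_cat // take_cat ltn_neqAle le_ac andbT.
  case: eqP => [Ea|_ Ha]; last by rewrite {1}Ha cat_take_drop.
  by rewrite Ea subnn take0 cats0 => ->; rewrite drop_size cats0.
split=> //; move: E; rewrite {1}Ec -catA => /(congr1 (drop (size a))).
by rewrite !drop_size_cat.
Qed.

Lemma run_cat w a b :
  run w (a ++ b) = if run w a is Some w' then run w' b else None.
Proof. by elim: a w => //= s a IH w; case: (apply_slice w s). Qed.

Lemma run_rcons w p s :
  run w (rcons p s) = if run w p is Some w' then apply_slice w' s else None.
Proof.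
rewrite -cats1 run_cat; case: (run w p) => // w' /=.
by case: (apply_slice w' s).
Qed.

Lemma run_pair w s1 s2 w' : run w [:: s1; s2] = Some w' <->
  exists w1, apply_slice w s1 = Some w1 /\ apply_slice w1 s2 = Some w'.
Proof.
rewrite /=; case: (apply_slice w s1) => [w1|]; last by split=> // -[? []].
split; first by case E: (apply_slice w1 s2) => [w2|] // [<-]; exists w1.
by case=> _ [[<-] ->].
Qed.

Lemma shift_cat k a b : shift k (a ++ b) = shift k a ++ shift k b.
Proof. exact: map_cat. Qed.

Lemma shift_shift k j u : shift k (shift j u) = shift (j + k) u.
Proof. by rewrite /shift -map_comp; apply: eq_map => -[g i] /=; rewrite addnA. Qed.

Lemma shift0 u : shift 0 u = u.
Proof. by elim: u => //= -[g i] u; rewrite /shift /= addn0 => ->. Qed.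

Lemma count_virtual_cat a b :
  count_virtual (a ++ b) = count_virtual a + count_virtual b.
Proof. exact: count_cat. Qed.

Lemma count_virtual_shift k u : count_virtual (shift k u) = count_virtual u.
Proof. by rewrite /count_virtual count_map; apply: eq_count => -[]. Qed.

Lemma apply_slice_shift x y g n :
  apply_slice (x ++ y) (g, n + size x) = omap (cat x) (apply_slice y (g, n)).
Proof.
case E: (apply_slice y (g, n)) => [y'|] /=.
  move/apply_sliceP: E => [x1 [y1 [H1 -> ->]]].
  by apply/apply_sliceP; exists (x ++ x1), y1; rewrite size_cat H1 addnC !catA.
case E2: (apply_slice (x ++ y) (g, n + size x)) => [z|] //.
move/apply_sliceP: E2 => [x1 [y1 [H1 Exy _]]].
have [u [Ex1 Ey]] := cat_eq_cat_leq Exy (leq_trans (leq_addl _ _) (eq_leq (esym H1))).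
suff : apply_slice y (g, n) = Some (u ++ gout g ++ y1) by rewrite E.
by apply/apply_sliceP; exists u, y1; split=> //; move: H1; rewrite Ex1 size_cat; lia.
Qed.

Lemma run_shift x y u :
  run (x ++ y) (shift (size x) u) = omap (cat x) (run y u).
Proof.
elim: u y => [|[g n] u IH] y //=.
by rewrite apply_slice_shift; case: (apply_slice y (g, n)).
Qed.

Lemma run_shiftP w k u w' : k <= size w ->
  run w (shift k u) = Some w' <->
  exists z, run (drop k w) u = Some z /\ w' = take k w ++ z.
Proof.
move=> le_kw.
have Hk : size (take k w) = k by rewrite size_take; case: ltnP => //; lia.
have := run_shift (take k w) (drop k w) u; rewrite Hk cat_take_drop => ->.
case: (run (drop k w) u) => [z|] /=; last by split=> // -[? []].
by split=> [[<-]|[_ [[<-] ->]]] //; exists z.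
Qed.

Lemma run_shift_leq w k x w' :
  run w (shift k x) = Some w' -> 0 < size x -> k <= size w.
Proof.
case: x => // -[g n] x /=.
case E: (apply_slice w (g, n + k)) => [w1|] // _ _.
by move/apply_sliceP: E => [x1 [y1 [H1 -> _]]]; rewrite !size_cat H1; lia.
Qed.

Lemma run_catr w z u w' : run w u = Some w' -> run (w ++ z) u = Some (w' ++ z).
Proof.
elim: u w => [|[g i] u IH] w /=; first by case=> ->.
case E: (apply_slice w (g, i)) => [w1|] // /IH.
move/apply_sliceP: E => [x [y [Hx -> ->]]].
suff -> : apply_slice ((x ++ gin g ++ y) ++ z) (g, i) = Some (x ++ gout g ++ y ++ z).
  by rewrite !catA.
by apply/apply_sliceP; exists x, (y ++ z); rewrite !catA.
Qed.

Lemma run_closed z x : run [::] x = Some [::] -> run z x = Some z.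
Proof. exact: (run_catr z). Qed.

(** * Cobordism *)

Local Notation cob := rv_cobordant.

Coercion RV_iso : isotopy_rule >-> rv_rule.
Coercion CB_rv : rv_rule >-> cob_rule.

Lemma cob_refl d : cob d d. Proof. exact: rst_refl. Qed.
Lemma cob_sym d e : cob d e -> cob e d. Proof. exact: rst_sym. Qed.
Lemma cob_trans d e f : cob d e -> cob e f -> cob d f. Proof. exact: rst_trans. Qed.

Lemma cob_valid d e : cob d e -> valid d <-> valid e.
Proof.
elim=> {d e} [d e [Hd [He _]] | d | d e _ IH | d e f _ IH1 _ IH2] //.
- by rewrite IH.
- by rewrite IH1 IH2.
Qed.

Lemma cob_rule_odd u v : cob_rule u v ->
  odd (count_virtual u) = odd (count_virtual v).
Proof.
case=> [{}u {}v [{}u {}v [g h i j _||||||] | | | | | t1 t2 t3 a b c _] | |] //.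
- by case: g; case: h.
- by case: t1; case: t2; case: t3.
Qed.

Lemma cob_odd d e : cob d e -> odd (count_virtual d) = odd (count_virtual e).
Proof.
elim=> {d e} [d e [_ [_ [p [s [u [v [k [R [-> ->]]]]]]]]] | d | d e _ -> | d e f _ -> _ ->] //.
by rewrite !count_virtual_cat !count_virtual_shift !oddD (cob_rule_odd R).
Qed.

Lemma cob_step u v p s k : cob_rule u v \/ cob_rule v u ->
  valid (p ++ shift k u ++ s) -> valid (p ++ shift k v ++ s) ->
  cob (p ++ shift k u ++ s) (p ++ shift k v ++ s).
Proof.
case=> R Hu Hv; [|apply: cob_sym]; apply: rst_step; do !split=> //.
- by exists p, s, u, v, k.
- by exists p, s, v, u, k.
Qed.

Lemma valid_cat a b : valid a -> valid b -> valid (a ++ b).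
Proof. by rewrite /valid run_cat => ->. Qed.

Lemma cob_catr a a' b : cob a a' -> valid b -> cob (a ++ b) (a' ++ b).
Proof.
move=> H Hb; elim: H => {a a'}
  [d e [Hd [He [p [s [u [v [k [R [Ed Ee]]]]]]]]] | d | d e _ | d e f _ IH1 _ IH2].
- move: (valid_cat Hd Hb) (valid_cat He Hb); rewrite Ed Ee -!catA => Hd' He'.
  by apply: rst_step; split; [|split]; last exists p, (s ++ b), u, v, k.
- exact: cob_refl.
- exact: cob_sym.
- exact: cob_trans IH2.
Qed.

Lemma cob_catl a b b' : cob b b' -> valid a -> cob (a ++ b) (a ++ b').
Proof.
move=> H Ha; elim: H => {b b'}
  [d e [Hd [He [p [s [u [v [k [R [Ed Ee]]]]]]]]] | d | d e _ | d e f _ IH1 _ IH2].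
- apply: rst_step; split; [exact: valid_cat | split; first exact: valid_cat].
  by exists (a ++ p), s, u, v, k; rewrite Ed Ee -!catA.
- exact: cob_refl.
- exact: cob_sym.
- exact: cob_trans IH2.
Qed.

Lemma cob_cat a a' b b' : cob a a' -> cob b b' -> valid a -> valid b ->
  cob (a ++ b) (a' ++ b').
Proof.
move=> Ha Hb va vb; apply: cob_trans (cob_catr Ha vb) _.
by apply: cob_catl Hb _; rewrite -(cob_valid Ha).
Qed.

(** * Local cobordism *)

Definition run_sub (x y : diagram) :=
  forall z z', run z x = Some z' -> run z y = Some z'.

(* [x] may be replaced by [y] up to cobordism wherever [x] occurs in a diagram. *)
Definition lcob (x y : diagram) :=
  run_sub x y /\
  forall p s k w, run [::] p = Some w -> k <= size w ->
    valid (p ++ shift k x ++ s) -> cob (p ++ shift k x ++ s) (p ++ shift k y ++ s).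

Lemma run_sub_shift x y k w w' : run_sub x y -> k <= size w ->
  run w (shift k x) = Some w' -> run w (shift k y) = Some w'.
Proof.
move=> xy le_kw /(run_shiftP _ _ le_kw) [z [Hz ->]].
by apply/(run_shiftP _ _ le_kw); exists z; split=> //; apply: xy.
Qed.

Lemma run_sub_closed x y : run [::] x = Some [::] -> run [::] y = Some [::] ->
  run_sub x y.
Proof. by move=> Hx Hy z z'; rewrite (run_closed z Hx) => -[<-]; apply: run_closed. Qed.

Lemma valid_catP p x s :
  valid (p ++ x ++ s) <->
  exists w w', [/\ run [::] p = Some w, run w x = Some w' & run w' s = Some [::]].
Proof.
rewrite /valid run_cat; split; last by case=> w [w' [-> /= Hx Hs]]; rewrite run_cat Hx.
case Ep: (run [::] p) => [w|] //; rewrite run_cat.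
by case Ex: (run w x) => [w'|] // Hs; exists w, w'.
Qed.

Lemma valid_run_sub x y p s k w : run_sub x y -> run [::] p = Some w ->
  k <= size w -> valid (p ++ shift k x ++ s) -> valid (p ++ shift k y ++ s).
Proof.
move=> xy Hp le_kw /valid_catP [w1 [w2 [Hp' Hx Hs]]].
move: Hp'; rewrite Hp => -[Ew1]; subst w1.
by apply/valid_catP; exists w, w2; split=> //; apply: run_sub_shift Hx.
Qed.

Lemma lcob_refl x : lcob x x.
Proof. by split=> // *; apply: cob_refl. Qed.

Lemma lcob_trans x y z : lcob x y -> lcob y z -> lcob x z.
Proof.
move=> [xy Hxy] [yz Hyz]; split=> [w w' /xy /yz //|p s k w Hp le_kw Hv].
apply: cob_trans (Hxy _ _ _ _ Hp le_kw Hv) _.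
exact: Hyz Hp le_kw (valid_run_sub xy Hp le_kw Hv).
Qed.

Lemma lcob_cob x y p s k : lcob x y -> 0 < size x ->
  valid (p ++ shift k x ++ s) -> cob (p ++ shift k x ++ s) (p ++ shift k y ++ s).
Proof.
move=> [_ Hxy] x_pos Hv; have /valid_catP [w [w' [Hp Hx _]]] := Hv.
exact: Hxy Hp (run_shift_leq Hx x_pos) Hv.
Qed.

Lemma lcob_cob0 x y p s : lcob x y -> 0 < size x ->
  valid (p ++ x ++ s) -> cob (p ++ x ++ s) (p ++ y ++ s).
Proof. by move=> xy x_pos; have := @lcob_cob x y p s 0 xy x_pos; rewrite !shift0. Qed.

Lemma lcob_ctx x y a b : lcob x y -> 0 < size x -> lcob (a ++ x ++ b) (a ++ y ++ b).
Proof.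
move=> xy x_pos; split=> [z z'|p s k w _ _].
  rewrite !run_cat; case: (run z a) => // z1; rewrite !run_cat.
  case Ex: (run z1 x) => [z2|] //; rewrite -(shift0 x) in Ex.
  by rewrite -(shift0 y) (run_sub_shift xy.1 (run_shift_leq Ex x_pos) Ex).
have Ectx u : p ++ shift k (a ++ u ++ b) ++ s = (p ++ shift k a) ++ shift k u ++ shift k b ++ s.
  by rewrite !shift_cat !catA.
by rewrite !Ectx; apply: lcob_cob.
Qed.

Lemma lcob_step_closed a b j u v : cob_rule u v \/ cob_rule v u ->
  run [::] (a ++ shift j u ++ b) = Some [::] ->
  run [::] (a ++ shift j v ++ b) = Some [::] ->
  lcob (a ++ shift j u ++ b) (a ++ shift j v ++ b).
Proof.
move=> R Hu Hv; split=> [|p s k w Hp le_kw Hvu]; first exact: run_sub_closed.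
have Hvv := valid_run_sub (run_sub_closed Hu Hv) Hp le_kw Hvu.
have Ectx c : p ++ shift k (a ++ shift j c ++ b) ++ s =
    (p ++ shift k a) ++ shift (j + k) c ++ shift k b ++ s.
  by rewrite !shift_cat shift_shift !catA.
by move: Hvu Hvv; rewrite !Ectx; apply: cob_step.
Qed.

Lemma lcob_rule u v : cob_rule u v \/ cob_rule v u -> run_sub u v -> lcob u v.
Proof.
move=> R uv; split=> // p s k w Hp le_kw Hu.
exact: cob_step R Hu (valid_run_sub uv Hp le_kw Hu).
Qed.

(* A step of a certificate inside a closed diagram [x]: apply the rule [u ~ v]
   to the slices [n, n + size u) of [x], which sit [j] places to the right. *)
Lemma lcob_rewrite n j u v x y : cob_rule u v \/ cob_rule v u ->
  [/\ take (size u) (drop n x) = shift j u, run [::] x = Some [::] &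
      run [::] (take n x ++ shift j v ++ drop (n + size u) x) = Some [::]] ->
  lcob (take n x ++ shift j v ++ drop (n + size u) x) y -> lcob x y.
Proof.
move=> R [Hu Hx Hx']; apply: lcob_trans.
have Ex : x = take n x ++ shift j u ++ drop (n + size u) x.
  by rewrite -Hu addnC -drop_drop !cat_take_drop.
by rewrite {1}Ex; apply: lcob_step_closed; rewrite -?Ex.
Qed.

Lemma lcob_move n j u v x y : cob_rule u v ->
  [/\ take (size u) (drop n x) = shift j u, run [::] x = Some [::] &
      run [::] (take n x ++ shift j v ++ drop (n + size u) x) = Some [::]] ->
  lcob (take n x ++ shift j v ++ drop (n + size u) x) y -> lcob x y.
Proof. by move=> R; apply: lcob_rewrite; left. Qed.

Lemma lcob_move_rev n j u v x y : cob_rule v u ->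
  [/\ take (size u) (drop n x) = shift j u, run [::] x = Some [::] &
      run [::] (take n x ++ shift j v ++ drop (n + size u) x) = Some [::]] ->
  lcob (take n x ++ shift j v ++ drop (n + size u) x) y -> lcob x y.
Proof. by move=> R; apply: lcob_rewrite; right. Qed.

Arguments lcob_move n j {u v x y}.
Arguments lcob_move_rev n j {u v x y}.

Lemma run_swap g h i j w : i + size (gout g) <= j ->
  run w [:: (g, i); (h, j)] = run w [:: (h, j + size (gin g) - size (gout g)); (g, i)].
Proof.
move=> le_ij.
have fwd z : run w [:: (g, i); (h, j)] = Some z ->
    run w [:: (h, j + size (gin g) - size (gout g)); (g, i)] = Some z.
  move=> /run_pair [w1 [/apply_sliceP [x1 [y1 [H1 -> ->]]]
                       /apply_sliceP [x2 [y2 [H2 E ->]]]]].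
  rewrite catA in E.
  have le12 : size (x1 ++ gout g) <= size x2 by rewrite size_cat H1 H2.
  have [u [Ex2 Ey1]] := cat_eq_cat_leq E le12.
  apply/run_pair; exists (x1 ++ gin g ++ u ++ gout h ++ y2).
  split; apply/apply_sliceP.
  - exists (x1 ++ gin g ++ u), y2; rewrite Ey1 !catA; split=> //.
    by move: H2; rewrite Ex2 !size_cat H1; lia.
  - by exists x1, (u ++ gout h ++ y2); rewrite Ex2 !catA.
have bwd z : run w [:: (h, j + size (gin g) - size (gout g)); (g, i)] = Some z ->
    run w [:: (g, i); (h, j)] = Some z.
  move=> /run_pair [w1 [/apply_sliceP [x1 [y1 [H1 -> ->]]]
                       /apply_sliceP [x2 [y2 [H2 E ->]]]]].
  have E' : (x2 ++ gin g) ++ y2 = x1 ++ gout h ++ y1 by rewrite -catA E.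
  have le21 : size (x2 ++ gin g) <= size x1 by rewrite size_cat H1 H2; lia.
  have [u [Ex1 Ey2]] := cat_eq_cat_leq E' le21.
  apply/run_pair; exists (x2 ++ gout g ++ u ++ gin h ++ y1).
  split; apply/apply_sliceP.
  - by exists x2, (u ++ gin h ++ y1); rewrite Ex1 !catA.
  - exists (x2 ++ gout g ++ u), y1; rewrite Ey2 !catA; split=> //.
    by move: H1; rewrite Ex1 !size_cat H2; lia.
case E: (run w [:: (g, i); (h, j)]) => [z|]; first by rewrite (fwd z E).
by case E': (run w _) => [z|] //; rewrite (bwd z E') in E.
Qed.

Lemma lcob_swap g h i j j' : i + size (gout g) <= j ->
  j' = j + size (gin g) - size (gout g) ->
  lcob [:: (g, i); (h, j)] [:: (h, j'); (g, i)].
Proof.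
move=> le_ij ->; apply: lcob_rule; first by left; do 3!constructor.
by move=> z z'; rewrite (run_swap h z le_ij).
Qed.

Lemma lcob_swap_rev g h i j j' : i + size (gout g) <= j ->
  j' = j + size (gin g) - size (gout g) ->
  lcob [:: (h, j'); (g, i)] [:: (g, i); (h, j)].
Proof.
move=> le_ij ->; apply: lcob_rule; first by right; do 3!constructor.
by move=> z z'; rewrite (run_swap h z le_ij).
Qed.

Lemma lcob_death b : lcob [:: (Cup b, 0); (Cap b, 0)] [::].
Proof.
apply: lcob_rule; first by right; constructor.
by move=> z z' /run_pair [z1 [/cup_cap -> [->]]].
Qed.

Lemma lcob_zigzag_r b : lcob [:: (Cup b, 0); (Cap (~~ b), 1)] [::].
Proof.
apply: lcob_rule; first by left; do 3!constructor.
move=> z z'; rewrite /= /apply_slice /=.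
by case: b; case: z => [|[] z] //=; rewrite ?take0 ?drop0 /= => // -[->].
Qed.

Lemma lcob_zigzag_l b : lcob [:: (Cup b, 1); (Cap (~~ b), 0)] [::].
Proof.
apply: lcob_rule; first by left; do 3!constructor.
move=> z z'; rewrite /= /apply_slice /=.
by case: b; case: z => [|[] z] //=; rewrite ?take0 ?drop0 /= => // -[->].
Qed.

Definition xflip (t : xkind) : xkind :=
  if t is Classical k then Classical (~~ k) else Virtual.

Lemma lcob_rotate_parallel t o : lcob [:: (mkX t o o, 0)]
  [:: (Cup (~~ o), 2); (mkX (xflip t) o (~~ o), 1); (Cap o, 0)].
Proof.
apply: lcob_rule.
  right; case: t => [k|]; case: o; try case: k.
  - exact: (IR_rot_cr_l false true false).
  - exact: (IR_rot_cr_l true true false).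
  - exact: (IR_rot_cr_l false false true).
  - exact: (IR_rot_cr_l true false true).
  - exact: (IR_rot_vcr_l true false).
  - exact: (IR_rot_vcr_l false true).
move=> z z'; case: t => [k|]; case: o; case: z => [|[] [|[] z]] //=;
  by rewrite /apply_slice /= ?take0 ?drop0.
Qed.

(** * Curls *)

Definition curl (t : xkind) (o : bool) : diagram :=
  [:: (Cup o, 0); (mkX t o (~~ o), 0); (Cap (~~ o), 0)].

Definition nested_curl (c a : bool) : diagram :=
  (Cup c, 0) :: shift 1 (curl Virtual a) ++ [:: (Cap c, 0)].

Lemma lcob_curl_classical k o : lcob (curl (Classical k) o) [::].
Proof.
case: o; case: k.
- apply: (lcob_move_rev 1 0 (IR_rot_cr_r false true false)) => [//|/=].
  apply: (lcob_move_rev 3 0 (@IR_interchange (Cap false) (Cap true) 0 0 erefl)) => [//|/=].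
  apply: (lcob_move 1 0 (RV_R1_l false true)) => [//|/=].
  apply: (lcob_move_rev 0 0 (CB_birth true)) => [//|/=].
  exact: lcob_refl.
- apply: (lcob_move_rev 1 0 (IR_rot_cr_r true true false)) => [//|/=].
  apply: (lcob_move_rev 3 0 (@IR_interchange (Cap false) (Cap true) 0 0 erefl)) => [//|/=].
  apply: (lcob_move 1 0 (RV_R1_l true true)) => [//|/=].
  apply: (lcob_move_rev 0 0 (CB_birth true)) => [//|/=].
  exact: lcob_refl.
- apply: (lcob_move_rev 1 0 (IR_rot_cr_l false true true)) => [//|/=].
  apply: (lcob_move 0 0 (@IR_interchange (Cup false) (Cup true) 0 2 erefl)) => [//|/=].
  apply: (lcob_move 1 0 (RV_R1_l false true)) => [//|/=].
  apply: (lcob_move_rev 0 0 (CB_birth true)) => [//|/=].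
  exact: lcob_refl.
- apply: (lcob_move_rev 1 0 (IR_rot_cr_l true true true)) => [//|/=].
  apply: (lcob_move 0 0 (@IR_interchange (Cup false) (Cup true) 0 2 erefl)) => [//|/=].
  apply: (lcob_move 1 0 (RV_R1_l true true)) => [//|/=].
  apply: (lcob_move_rev 0 0 (CB_birth true)) => [//|/=].
  exact: lcob_refl.
Qed.

Lemma lcob_curl_virtual o : lcob (curl Virtual o) (curl Virtual true).
Proof.
case: o; first exact: lcob_refl.
apply: (lcob_move_rev 1 0 (IR_rot_vcr_l true true)) => [//|/=].
apply: (lcob_move 3 0 (@IR_interchange (Cap false) (Cap true) 0 0 erefl)) => [//|/=].
apply: (lcob_move 0 0 (@IR_interchange (Cup false) (Cup true) 0 2 erefl)) => [//|/=].
apply: (lcob_move 1 0 (IR_rot_vcr_r true false)) => [//|/=].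
exact: lcob_refl.
Qed.

(* The two curls are merged by a saddle into one circle with two virtual
   crossings, which cancel by virtual R2. *)
Lemma lcob_curl_pair : lcob (curl Virtual true ++ curl Virtual true) [::].
Proof.
apply: (lcob_move_rev 1 0 (IR_rot_vcr_r true false)) => [//|/=].
apply: (lcob_move_rev 0 0 (@IR_interchange (Cup false) (Cup true) 0 2 erefl)) => [//|/=].
apply: (lcob_move_rev 3 0 (@IR_interchange (Cap false) (Cap true) 0 0 erefl)) => [//|/=].
apply: (lcob_move 1 0 (IR_rot_vcr_l true true)) => [//|/=].
apply: (lcob_move_rev 2 0 (CB_saddle true)) => [//|/=].
apply: (lcob_move 1 0 (RV_vR2 false true)) => [//|/=].
apply: (lcob_move_rev 0 0 (CB_birth false)) => [//|/=].
exact: lcob_refl.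
Qed.

(* The curl is passed through an arc of the circle around it by virtual R2 and
   R3 moves; saddles and deaths tidy up. *)
Lemma lcob_nested_curl c a : lcob (nested_curl c a) (curl Virtual true).
Proof.
case: c; case: a.
- apply: (lcob_move_rev 2 0 (RV_vR2 true true)) => [//|/=].
  apply: (lcob_move_rev 3 0 (IR_zigzag_r true)) => [//|/=].
  apply: (lcob_move_rev 2 0 (@IR_interchange (Cup true) (VCr true true) 0 2 erefl)) => [//|/=].
  apply: (lcob_move_rev 1 0 (@IR_interchange (Cup true) (Cup true) 0 3 erefl)) => [//|/=].
  apply: (lcob_move 2 1 (IR_rot_vcr_l true true)) => [//|/=].
  apply: (lcob_move_rev 2 0 (@RV_tri Virtual Virtual Virtual true false true I)) => [//|/=].
  apply: (lcob_move_rev 4 0 (IR_zigzag_l true)) => [//|/=].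
  apply: (lcob_move_rev 0 0 (@IR_interchange (Cup true) (Cup true) 0 2 erefl)) => [//|/=].
  apply: (lcob_move_rev 1 0 (@IR_interchange (VCr true false) (Cup true) 0 2 erefl)) => [//|/=].
  apply: (lcob_move 5 0 (@IR_interchange (Cap false) (VCr false true) 0 0 erefl)) => [//|/=].
  apply: (lcob_move 6 0 (@IR_interchange (Cap false) (Cap false) 0 1 erefl)) => [//|/=].
  apply: (lcob_move 7 0 (@IR_interchange (Cap false) (Cap true) 0 0 erefl)) => [//|/=].
  apply: (lcob_move 4 1 (IR_rot_vcr_r true true)) => [//|/=].
  apply: (lcob_move 3 1 (RV_vR2 true true)) => [//|/=].
  apply: (lcob_move_rev 2 2 (CB_birth true)) => [//|/=].
  exact: lcob_refl.
- apply: (lcob_move_rev 3 0 (RV_vR2 true true)) => [//|/=].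
  apply: (lcob_move_rev 4 0 (IR_zigzag_l false)) => [//|/=].
  apply: (lcob_move 5 0 (@IR_interchange (Cap true) (VCr true true) 0 0 erefl)) => [//|/=].
  apply: (lcob_move 6 0 (@IR_interchange (Cap true) (Cap true) 0 1 erefl)) => [//|/=].
  apply: (lcob_move 4 1 (IR_rot_vcr_r true false)) => [//|/=].
  apply: (lcob_move_rev 2 0 (@RV_tri Virtual Virtual Virtual true false true I)) => [//|/=].
  apply: (lcob_move 3 0 (CB_saddle false)) => [//|/=].
  apply: (lcob_move 7 0 (@IR_interchange (Cap true) (Cap true) 0 0 erefl)) => [//|/=].
  apply: (lcob_move 6 0 (@IR_interchange (VCr false true) (Cap true) 0 2 erefl)) => [//|/=].
  apply: (lcob_move 4 0 (IR_rot_vcr_r true false)) => [//|/=].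
  apply: (lcob_move 4 0 (RV_vR2 true false)) => [//|/=].
  apply: (lcob_move 3 0 (@IR_interchange (Cap false) (Cap true) 0 0 erefl)) => [//|/=].
  apply: (lcob_move 2 0 (@IR_interchange (VCr true false) (Cap true) 0 2 erefl)) => [//|/=].
  apply: (lcob_move 1 1 (IR_zigzag_r false)) => [//|/=].
  exact: lcob_refl.
- apply: (lcob_move_rev 3 2 (RV_vR2 true true)) => [//|/=].
  apply: (lcob_move_rev 4 3 (IR_zigzag_r true)) => [//|/=].
  apply: (lcob_move_rev 5 0 (@IR_interchange (VCr true true) (Cap false) 2 4 erefl)) => [//|/=].
  apply: (lcob_move_rev 6 0 (@IR_interchange (Cap false) (Cap false) 1 2 erefl)) => [//|/=].
  apply: (lcob_move 4 1 (IR_rot_vcr_l true true)) => [//|/=].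
  apply: (lcob_move 2 1 (@RV_tri Virtual Virtual Virtual true false true I)) => [//|/=].
  apply: (lcob_move_rev 3 3 (IR_zigzag_l true)) => [//|/=].
  apply: (lcob_move 2 0 (@IR_interchange (VCr false true) (Cup true) 2 4 erefl)) => [//|/=].
  apply: (lcob_move 1 0 (@IR_interchange (Cup true) (Cup true) 1 4 erefl)) => [//|/=].
  apply: (lcob_move 2 1 (IR_rot_vcr_r true true)) => [//|/=].
  apply: (lcob_move 2 1 (RV_vR2 true true)) => [//|/=].
  apply: (lcob_move_rev 3 0 (@IR_interchange (Cap false) (Cap false) 0 0 erefl)) => [//|/=].
  apply: (lcob_move_rev 2 0 (@IR_interchange (Cap false) (VCr true false) 0 0 erefl)) => [//|/=].
  apply: (lcob_move_rev 1 0 (@IR_interchange (Cap false) (Cup true) 0 0 erefl)) => [//|/=].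
  apply: (lcob_move_rev 0 0 (CB_birth false)) => [//|/=].
  exact: lcob_refl.
- apply: (lcob_move_rev 2 2 (RV_vR2 true true)) => [//|/=].
  apply: (lcob_move_rev 3 3 (IR_zigzag_l false)) => [//|/=].
  apply: (lcob_move 2 0 (@IR_interchange (VCr true true) (Cup false) 2 4 erefl)) => [//|/=].
  apply: (lcob_move 1 0 (@IR_interchange (Cup false) (Cup false) 1 4 erefl)) => [//|/=].
  apply: (lcob_move 2 1 (IR_rot_vcr_r true false)) => [//|/=].
  apply: (lcob_move 2 1 (@RV_tri Virtual Virtual Virtual true false true I)) => [//|/=].
  apply: (lcob_move 4 2 (CB_saddle true)) => [//|/=].
  apply: (lcob_move 0 0 (@IR_interchange (Cup false) (Cup false) 0 2 erefl)) => [//|/=].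
  apply: (lcob_move 1 0 (@IR_interchange (Cup false) (VCr false true) 0 2 erefl)) => [//|/=].
  apply: (lcob_move 2 0 (IR_rot_vcr_r true false)) => [//|/=].
  apply: (lcob_move 1 0 (RV_vR2 false true)) => [//|/=].
  apply: (lcob_move 0 0 (@IR_interchange (Cup false) (Cup true) 0 2 erefl)) => [//|/=].
  apply: (lcob_move 1 0 (@IR_interchange (Cup false) (VCr true false) 0 2 erefl)) => [//|/=].
  apply: (lcob_move 2 0 (IR_zigzag_r false)) => [//|/=].
  exact: lcob_refl.
Qed.

(** * Cappings *)

Definition is_cap (s : slice) : bool := if s.1 is Cap _ then true else false.
Definition cup_of (s : slice) : slice := (if s.1 is Cap b then Cup b else s.1, s.2).
Definition cups (C : diagram) : diagram := rev (map cup_of C).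
Definition capping (w : seq bool) (C : diagram) := all is_cap C /\ run w C = Some [::].

Lemma cups_cons s C : cups (s :: C) = cups C ++ [:: cup_of s].
Proof. by rewrite /cups /= rev_cons cats1. Qed.

Lemma run_cups C w w' : all is_cap C -> run w C = Some w' -> run w' (cups C) = Some w.
Proof.
elim: C w => [|[g i] C IH] w /=; first by move=> _ [->].
case: g => // b HC; case E: (apply_slice w (Cap b, i)) => [w1|] // HCw.
by rewrite cups_cons run_cat (IH _ HC HCw) /=; move/cup_cap: E => ->.
Qed.

Lemma run_cups_inv C w w' : all is_cap C -> run w' (cups C) = Some w -> run w C = Some w'.
Proof.
elim: C w w' => [|[g i] C IH] w w' /=; first by move=> _ [->].
case: g => // b HC; rewrite cups_cons run_cat.
case E: (run w' (cups C)) => [w1|] //=.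
case E2: (apply_slice w1 (Cup b, i)) => [w2|] // [<-].
by move/cup_cap: E2 => ->; apply: IH.
Qed.

Lemma capping_cons w g i C : capping w ((g, i) :: C) ->
  exists b w1, [/\ g = Cap b, apply_slice w (Cap b, i) = Some w1 & capping w1 C].
Proof.
case; case: g => //= b HC.
by case E: (apply_slice w (Cap b, i)) => [w1|] // HCw; exists b, w1.
Qed.

Lemma capping_size w C : capping w C -> size w = (size C).*2.
Proof.
elim: C w => [|[g i] C IH] w HC; first by case: HC => _ [->].
have [b [w1 [_ /apply_sliceP [x [y [_ -> ->]]] /IH]]] := capping_cons HC.
by rewrite !size_cat /= -!mul2n; lia.
Qed.

Lemma capping_cups w C : capping w C -> run [::] (cups C) = Some w.
Proof. by case=> HC HCw; apply: run_cups HCw. Qed.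

Lemma valid_cups_capping w C D : capping w C -> capping w D -> valid (cups C ++ D).
Proof. by move=> /capping_cups HC [_ HD]; rewrite /valid run_cat HC. Qed.

Lemma valid_cups_cappingP C D : all is_cap C -> all is_cap D ->
  valid (cups C ++ D) -> exists w, capping w C /\ capping w D.
Proof.
move=> HC HD; rewrite -[cups C ++ D]cat0s => /valid_catP [_ [w [[<-] HCw HDw]]].
by exists w; split; split=> //; apply: run_cups_inv HCw.
Qed.

Definition balanced (w : seq bool) := count_mem true w == count_mem false w.

Lemma balanced_slice w s w' : apply_slice w s = Some w' -> balanced w = balanced w'.
Proof.
case: s => g i /apply_sliceP [x [y [_ -> ->]]].
have : count_mem true (gin g) + count_mem false (gout g) =
       count_mem false (gin g) + count_mem true (gout g).
  by case: g => [[]|[]|? [] []|[] []].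
by rewrite /balanced !count_cat => H; apply/eqP/eqP; lia.
Qed.

Lemma balanced_run w d w' : run w d = Some w' -> balanced w = balanced w'.
Proof.
elim: d w => [|s d IH] w /=; first by case=> ->.
by case E: (apply_slice w s) => [w1|] // /IH <-; apply: balanced_slice E.
Qed.

Lemma capping_balanced w C : capping w C -> balanced w.
Proof. by case=> _ /balanced_run ->. Qed.

Lemma nonconstant_adjacent a t : ~~ all (pred1 a) t ->
  exists x y b, a :: t = x ++ [:: b; ~~ b] ++ y.
Proof.
elim: t a => [|c t IH] a //=.
case: eqP => [->|/eqP neq_ca] /=.
  by move=> /IH [x [y [b E]]]; exists (a :: x), y, b; rewrite E.
by move=> _; exists [::], t, a; case: a c neq_ca => [] [].
Qed.

Lemma balanced_capping w : balanced w -> exists C, capping w C.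
Proof.
elim: (size w).+1 {-2}w (ltnSn (size w)) => // n IH [|a t] Hs Hb;
  first by exists [::].
have /nonconstant_adjacent [x [y [b E]]] : ~~ all (pred1 a) t.
  apply/negP => /all_pred1P Et; move: Hb; rewrite /balanced Et {Et Hs}.
  by case: a => /=; rewrite !count_nseq /= ?mul1n ?mul0n => /eqP; lia.
have Ecap : apply_slice (a :: t) (Cap b, size x) = Some (x ++ y).
  by rewrite E; apply/apply_sliceP; exists x, y.
have [||C [HC HCw]] := IH (x ++ y).
- by move: Hs; rewrite E !size_cat /=; lia.
- by rewrite -(balanced_slice Ecap).
by exists ((Cap b, size x) :: C); split=> //=; rewrite Ecap.
Qed.

Lemma cap_nth w b i w' : apply_slice w (Cap b, i) = Some w' ->
  nth false w i = b /\ nth false w i.+1 = ~~ b.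
Proof.
move/apply_sliceP => [x [y [Hx -> _]]] /=.
by rewrite !nth_cat Hx ltnn subnn ltnNge leqnSn /= subSnn.
Qed.

Lemma cob_split_capping C p s w : run [::] p = Some w -> capping w C ->
  run w s = Some [::] -> cob (p ++ s) (p ++ C ++ cups C ++ s).
Proof.
elim: C p s w => [|[g i] C IH] p s w Hp HC Hs; first exact: cob_refl.
have [b [w1 [-> Ecap HC1]]] := capping_cons HC.
have Ecup : apply_slice w1 (Cup b, i) = Some w by apply/cup_cap.
have saddle : cob (p ++ s) (p ++ [:: (Cap b, i); (Cup b, i)] ++ s).
  apply: (@cob_step [::] [:: (Cap b, 0); (Cup b, 0)]); first by left; constructor.
    by rewrite /valid run_cat Hp.
  by rewrite /valid run_cat Hp /= Ecap /= Ecup.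
apply: cob_trans saddle _.
have := IH (p ++ [:: (Cap b, i)]) ((Cup b, i) :: s) w1.
rewrite run_cat Hp /= Ecap /= Ecup => /(_ erefl HC1 Hs).
by rewrite cups_cons -!catA.
Qed.

Definition cappings_cob n := forall w C1 C2,
  size C2 = n -> capping w C1 -> capping w C2 -> cob (cups C1 ++ C2) [::].

Lemma cappings_cob_valid n C D : cappings_cob n ->
  all is_cap C -> all is_cap D -> size D = n ->
  valid (cups C ++ D) -> cob (cups C ++ D) [::].
Proof.
move=> IH HC HD HDn /(valid_cups_cappingP HC HD) [w [HCw HDw]].
exact: IH HCw HDw.
Qed.

Lemma cob_cups_cancel n x D1 D2 k : cappings_cob n -> lcob x [::] -> 0 < size x ->
  all is_cap D1 -> all is_cap D2 -> size D2 = n ->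
  valid (cups D1 ++ shift k x ++ D2) -> cob (cups D1 ++ shift k x ++ D2) [::].
Proof.
move=> IH x0 x_pos HD1 HD2 HD2n V.
have H := lcob_cob x0 x_pos V; apply: (cob_trans H).
by apply: cappings_cob_valid IH HD1 HD2 HD2n _; rewrite -(cob_valid H).
Qed.

Lemma apply_caps_right w b1 i1 w1 b2 i2 w2 : i1.+1 < i2 ->
  apply_slice w (Cap b1, i1) = Some w1 -> apply_slice w (Cap b2, i2) = Some w2 ->
  exists w12, apply_slice w1 (Cap b2, i2 - 2) = Some w12.
Proof.
move=> lt_i12 /apply_sliceP [x [y [Hx Ew ->]]] /apply_sliceP [x2 [y2 [Hx2 Ew2 _]]].
have E : (x ++ [:: b1; ~~ b1]) ++ y = x2 ++ [:: b2; ~~ b2] ++ y2 by rewrite -catA -Ew.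
have le_x : size (x ++ [:: b1; ~~ b1]) <= size x2 by rewrite size_cat Hx Hx2 /=; lia.
have [u [Ex2 Ey]] := cat_eq_cat_leq E le_x.
exists (x ++ u ++ y2); apply/apply_sliceP; exists (x ++ u), y2; rewrite Ey /= !catA.
by split=> //; move: Hx2; rewrite Ex2 !size_cat Hx /=; lia.
Qed.

Lemma apply_caps_left w b1 i1 w1 b2 i2 w2 : i2.+1 < i1 ->
  apply_slice w (Cap b1, i1) = Some w1 -> apply_slice w (Cap b2, i2) = Some w2 ->
  exists w12, apply_slice w1 (Cap b2, i2) = Some w12.
Proof.
move=> lt_i21 /apply_sliceP [x [y [Hx Ew ->]]] /apply_sliceP [x2 [y2 [Hx2 Ew2 _]]].
have E : (x2 ++ [:: b2; ~~ b2]) ++ y2 = x ++ [:: b1; ~~ b1] ++ y by rewrite -catA -Ew2.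
have le_x : size (x2 ++ [:: b2; ~~ b2]) <= size x by rewrite size_cat Hx Hx2 /=; lia.
have [u [Ex Ey2]] := cat_eq_cat_leq E le_x.
by exists (x2 ++ u ++ y); apply/apply_sliceP; exists x2, (u ++ y); rewrite Ex /= -!catA.
Qed.

(* Disjoint first caps: cap off [w1] starting with the second cap, cancel the
   two cappings of [w1] by induction, and commute the two cups. *)
Lemma cob_cups_capping_disjoint n w b1 i1 w1 D1 b2 i2 D2 i2' i1' w12 :
  cappings_cob n -> capping w1 D1 -> size D1 = n ->
  apply_slice w (Cap b1, i1) = Some w1 ->
  capping w ((Cap b2, i2) :: D2) -> size D2 = n ->
  apply_slice w1 (Cap b2, i2') = Some w12 ->
  lcob [:: (Cup b2, i2'); (Cup b1, i1)] [:: (Cup b1, i1'); (Cup b2, i2)] ->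
  cob (cups D1 ++ [:: (Cup b1, i1), (Cap b2, i2) & D2]) [::].
Proof.
move=> IH HD1 HD1n E1 HC2 HD2n E12 swap.
have bal12 : balanced w12 by rewrite -(balanced_slice E12) (capping_balanced HD1).
have [D12 HD12] := balanced_capping bal12.
have HE : capping w1 ((Cap b2, i2') :: D12).
  by case: HD12 => HD HDw; split=> //=; rewrite E12.
have HEn : size ((Cap b2, i2') :: D12) = n.
  by apply: double_inj; rewrite -(capping_size HE) -HD1n -(capping_size HD1).
have Hs : run w1 [:: (Cup b1, i1), (Cap b2, i2) & D2] = Some [::].
  by move/cup_cap: E1 => /= ->; case: HC2.
have HD2 : all is_cap D2 by case: HC2 => /andP [].
apply: cob_trans (cob_split_capping (capping_cups HD1) HE Hs) _.
rewrite catA; apply: cob_trans.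
  apply: cob_catr (IH _ _ _ HEn HD1 HE) _.
  by rewrite /valid run_cat (capping_cups HE).
rewrite cat0s cups_cons -catA /=.
have V : valid (cups D12 ++ [:: (Cup b2, i2'); (Cup b1, i1)] ++ (Cap b2, i2) :: D2).
  have -> : cups D12 ++ [:: (Cup b2, i2'); (Cup b1, i1)] ++ (Cap b2, i2) :: D2 =
      cups ((Cap b2, i2') :: D12) ++ [:: (Cup b1, i1), (Cap b2, i2) & D2].
    by rewrite cups_cons -catA.
  by rewrite /valid run_cat (capping_cups HE).
have H1 := lcob_cob0 swap isT V; apply: (cob_trans H1).
have V1 := proj1 (cob_valid H1) V.
have -> : cups D12 ++ [:: (Cup b1, i1'); (Cup b2, i2)] ++ (Cap b2, i2) :: D2 =
    cups ((Cap b1, i1') :: D12) ++ shift i2 [:: (Cup b2, 0); (Cap b2, 0)] ++ D2.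
  by rewrite cups_cons -!catA.
apply: (cob_cups_cancel IH (lcob_death b2)) => //.
- by case: HD12.
- by move: V1; rewrite cups_cons -!catA.
Qed.

Lemma cappings_cob0 : cappings_cob 0.
Proof.
move=> w C1 C2 /size0nil -> HC1 HC2.
have /size0nil -> : size C1 = 0.
  by apply: double_inj; rewrite -(capping_size HC1) (capping_size HC2).
exact: cob_refl.
Qed.

Lemma cappings_cob_succ n : cappings_cob n -> cappings_cob n.+1.
Proof.
move=> IH w C1 [|[g2 i2] D2] //= [HD2n] HC1 HC2.
have [b2 [w2 [Eg2 E2 HD2]]] := capping_cons HC2; subst g2.
case: C1 HC1 (capping_size HC1) => [|[g1 i1] D1] HC1; first by rewrite (capping_size HC2).
have [b1 [w1 [Eg1 E1 HD1]]] := capping_cons HC1; subst g1.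
rewrite (capping_size HC2) /= HD2n => /double_inj [/esym HD1n].
have V := valid_cups_capping HC1 HC2.
rewrite cups_cons -catA in V *; rewrite /cup_of /= in V *.
have [[HD1c _] [HD2c _]] := (HD1, HD2).
have [N1 N1'] := cap_nth E1; have [N2 N2'] := cap_nth E2.
case: (ltngtP i1.+1 i2) => [lt12|lt21|eq12].
- have [w12 E12] := apply_caps_right lt12 E1 E2.
  apply: (cob_cups_capping_disjoint IH HD1 HD1n E1 HC2 HD2n E12).
  by apply: lcob_swap_rev => /=; [lia | rewrite addn0].
- case: (ltngtP i2.+1 i1) => [lt21'|lt12'|eq21].
  + have [w12 E12] := apply_caps_left lt21' E1 E2.
    apply: (cob_cups_capping_disjoint IH HD1 HD1n E1 HC2 HD2n E12).
    by apply: lcob_swap => /=; [lia | rewrite addn0].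
  + have Ei : i1 = i2 by lia.
    subst i2; have Eb : b2 = b1 by rewrite -N2 N1.
    rewrite {}Eb in V *; apply: (cob_cups_cancel (k := i1) IH (lcob_death b1)) => //.
  + subst i1; have Eb : b2 = ~~ b1 by rewrite -N1 N2' negbK.
    rewrite {}Eb in V *; apply: (cob_cups_cancel (k := i2) IH (lcob_zigzag_l b1)) => //.
- subst i2; have Eb : b2 = ~~ b1 by rewrite -N2 N1'.
  rewrite {}Eb in V *; apply: (cob_cups_cancel (k := i1) IH (lcob_zigzag_r b1)) => //.
Qed.

Lemma cob_cups_capping w C1 C2 : capping w C1 -> capping w C2 -> cob (cups C1 ++ C2) [::].
Proof.
have IH n : cappings_cob n by elim: n => [|n]; [exact: cappings_cob0 | exact: cappings_cob_succ].
exact: IH.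
Qed.

Lemma cob_capping_indep p w C C' : run [::] p = Some w ->
  capping w C -> capping w C' -> cob (p ++ C) (p ++ C').
Proof.
move=> Hp HC HC'; apply: cob_trans (cob_split_capping Hp HC' HC.2) _.
rewrite catA -[X in cob _ X]cats0; apply: cob_catl (cob_cups_capping HC' HC) _.
by rewrite /valid run_cat Hp; case: HC'.
Qed.

Lemma run_shift_closed x w i : run [::] x = Some [::] -> i <= size w ->
  run w (shift i x) = Some w.
Proof.
move=> Hx le_iw; apply/(run_shiftP _ _ le_iw); exists (drop i w).
by rewrite cat_take_drop (run_closed _ Hx).
Qed.

Lemma cob_cups_capping_lcob w D x i : capping w D -> lcob x [::] -> 0 < size x ->
  run [::] x = Some [::] -> i <= size w -> cob (cups D ++ shift i x ++ D) [::].
Proof.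
move=> HD x0 x_pos Hx le_iw.
have V : valid (cups D ++ shift i x ++ D).
  by rewrite /valid run_cat (capping_cups HD) run_cat run_shift_closed //; case: HD.
by apply: cob_trans (lcob_cob x0 x_pos V) (cob_cups_capping HD HD).
Qed.

(** * Capped diagrams *)

Definition curl_pow (n : nat) : diagram := if odd n then curl Virtual true else [::].

Lemma run_curl t o : run [::] (curl t o) = Some [::].
Proof. by case: t => [k|]; case: o. Qed.

Lemma cob_curl_pow_add m n : cob (curl_pow m ++ curl_pow n) (curl_pow (m + n)).
Proof.
rewrite /curl_pow oddD; case: (odd m); case: (odd n) => /=; rewrite ?cats0; try exact: cob_refl.
by have := @lcob_cob0 _ _ [::] [::] lcob_curl_pair isT; rewrite !cats0; apply.
Qed.

Lemma lcob_cup_curl_right c a i j : i <= j ->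
  lcob ((Cup c, j) :: shift i (curl Virtual a)) (shift i (curl Virtual a) ++ [:: (Cup c, j)]).
Proof.
move=> le_ij; rewrite /shift /= !add0n.
apply: (@lcob_trans _ [:: (Cup a, i); (Cup c, j.+2); (VCr a (~~ a), i); (Cap (~~ a), i)]).
  apply: (@lcob_ctx [:: (Cup c, j); (Cup a, i)] [:: (Cup a, i); (Cup c, j.+2)] [::]
    [:: (VCr a (~~ a), i); (Cap (~~ a), i)]) => //.
  by apply: lcob_swap_rev => /=; [lia | rewrite addn0 -addn2 addnK].
apply: (@lcob_trans _ [:: (Cup a, i); (VCr a (~~ a), i); (Cup c, j.+2); (Cap (~~ a), i)]).
  apply: (@lcob_ctx [:: (Cup c, j.+2); (VCr a (~~ a), i)] [:: (VCr a (~~ a), i); (Cup c, j.+2)]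
    [:: (Cup a, i)] [:: (Cap (~~ a), i)]) => //.
  by apply: lcob_swap_rev => /=; lia.
apply: (@lcob_ctx [:: (Cup c, j.+2); (Cap (~~ a), i)] [:: (Cap (~~ a), i); (Cup c, j)]
  [:: (Cup a, i); (VCr a (~~ a), i)] [::]) => //.
by apply: lcob_swap_rev => /=; lia.
Qed.

Lemma lcob_cup_curl_left c a i j : j + 2 <= i ->
  lcob ((Cup c, j) :: shift i (curl Virtual a))
       (shift (i - 2) (curl Virtual a) ++ [:: (Cup c, j)]).
Proof.
move=> le_ji; rewrite /shift /= !add0n.
apply: (@lcob_trans _ [:: (Cup a, i - 2); (Cup c, j); (VCr a (~~ a), i); (Cap (~~ a), i)]).
  apply: (@lcob_ctx [:: (Cup c, j); (Cup a, i)] [:: (Cup a, i - 2); (Cup c, j)] [::]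
    [:: (VCr a (~~ a), i); (Cap (~~ a), i)]) => //.
  by apply: lcob_swap => /=; lia.
apply: (@lcob_trans _ [:: (Cup a, i - 2); (VCr a (~~ a), i - 2); (Cup c, j); (Cap (~~ a), i)]).
  apply: (@lcob_ctx [:: (Cup c, j); (VCr a (~~ a), i)] [:: (VCr a (~~ a), i - 2); (Cup c, j)]
    [:: (Cup a, i - 2)] [:: (Cap (~~ a), i)]) => //.
  by apply: lcob_swap => /=; lia.
apply: (@lcob_ctx [:: (Cup c, j); (Cap (~~ a), i)] [:: (Cap (~~ a), i - 2); (Cup c, j)]
  [:: (Cup a, i - 2); (VCr a (~~ a), i - 2)] [::]) => //.
by apply: lcob_swap => /=; lia.
Qed.

Lemma cob_unnest D w i a : capping w D -> i <= size w ->
  cob (cups D ++ shift i (curl Virtual a) ++ D) (curl Virtual true).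
Proof.
elim: D w i a => [|[g j] D IH] w i a HD le_iw.
  have /size0nil Ew : size w = 0 by rewrite (capping_size HD).
  move: le_iw; rewrite Ew leqn0 => /eqP ->; rewrite shift0.
  by apply: (@lcob_cob0 _ _ [::] [::] (lcob_curl_virtual a)) => //; case: a.
have [c [w1 [Eg Ecap HD1]]] := capping_cons HD; subst g.
have /apply_sliceP [x [y [Hx Ew Ew1]]] := Ecap.
have size_w : size w = (size w1).+2 by rewrite Ew Ew1 !size_cat /=; lia.
have le_jw1 : j <= size w1 by rewrite Ew1 size_cat Hx leq_addr.
have run_curl_at i' w' : i' <= size w' -> run w' (shift i' (curl Virtual a)) = Some w'.
  by move=> le; apply: run_shift_closed (run_curl _ _) le.
have V : valid (cups ((Cap c, j) :: D) ++ shift i (curl Virtual a) ++ (Cap c, j) :: D).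
  by apply/valid_catP; exists w, w; split; [exact: capping_cups | exact: run_curl_at | case: HD].
rewrite cups_cons -catA in V *.
have death i' : i' <= size w1 -> cob (cups D ++ (shift i' (curl Virtual a) ++
    [:: (Cup c, j)]) ++ (Cap c, j) :: D) (curl Virtual true).
  move=> le_i'; apply: cob_trans (IH _ i' a HD1 le_i').
  have := @lcob_cob _ _ (cups D ++ shift i' (curl Virtual a)) D j (lcob_death c) isT.
  rewrite -!catA; apply; rewrite catA.
  apply/valid_catP; exists w1, w1; split; last by case: HD1.
    by rewrite run_cat (capping_cups HD1) run_curl_at.
  by apply: run_shift_closed => //; case: (c).
have nest x' : lcob ((Cup c, j) :: shift i (curl Virtual a)) x' -> cob
    (cups D ++ x' ++ (Cap c, j) :: D) (curl Virtual true) ->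
    cob (cups D ++ (Cup c, j) :: shift i (curl Virtual a) ++ (Cap c, j) :: D) (curl Virtual true).
  by move=> H; apply: cob_trans; apply: (@lcob_cob0 _ _ _ _ H).
case: (leqP i j) => [le_ij | lt_ji].
  apply: (nest _ (lcob_cup_curl_right c a le_ij)).
  exact: death (leq_trans le_ij le_jw1).
case: (leqP (j + 2) i) => [le_ji | lt_ij2].
  apply: (nest _ (lcob_cup_curl_left c a le_ji)).
  by apply: death; lia.
have Ei : i = j.+1 by lia.
subst i; apply: cob_trans (IH _ j true HD1 le_jw1).
exact: (lcob_cob (lcob_nested_curl c a) isT V).
Qed.

Lemma gen_cases g :
  [\/ exists b, g = Cup b, exists b, g = Cap b | exists t o1 o2, g = mkX t o1 o2].
Proof.
case: g => [b|b|k o1 o2|o1 o2].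
- by apply: Or31; exists b.
- by apply: Or32; exists b.
- by apply: Or33; exists (Classical k), o1, o2.
- by apply: Or33; exists Virtual, o1, o2.
Qed.

Lemma gin_mkX t o1 o2 : gin (mkX t o1 o2) = [:: o1; o2].
Proof. by case: t. Qed.

Lemma gout_mkX t o1 o2 : gout (mkX t o1 o2) = [:: o2; o1].
Proof. by case: t. Qed.

Definition parallel (s : slice) : bool :=
  match s.1 with Cr _ o1 o2 | VCr o1 o2 => o1 == o2 | _ => false end.

Lemma cob_capped_curl t o i D w : capping w D -> i <= size w ->
  cob (cups D ++ shift i (curl t o) ++ D) (curl_pow (count_virtual (curl t o))).
Proof.
case: t => [k|] HD le_iw; last exact: cob_unnest HD le_iw.
exact: cob_cups_capping_lcob HD (lcob_curl_classical k o) isT (run_curl _ _) le_iw.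
Qed.

Lemma cob_capped_slice w0 s w : apply_slice w0 s = Some w -> balanced w0 ->
  ~~ parallel s -> exists E C, [/\ capping w0 E, capping w C &
    cob (cups E ++ s :: C) (curl_pow (count_virtual [:: s]))].
Proof.
case: s => g i Es bal0 npar; have /apply_sliceP [x [y [Hx Ew0 Ew]]] := Es.
have bal : balanced w by rewrite -(balanced_slice Es).
have le_i0 : i <= size w0 by rewrite Ew0 size_cat Hx leq_addr.
have le_i : i <= size w by rewrite Ew size_cat Hx leq_addr.
have run_death b : run [::] [:: (Cup b, 0); (Cap b, 0)] = Some [::] by case: b.
case: (gen_cases g) => [[b Eg] | [b Eg] | [t [o1 [o2 Eg]]]]; subst g.
- have [E HE] := balanced_capping bal0.
  exists E, ((Cap b, i) :: E); split=> //.
    by split; [case: HE | move/cup_cap: Es => /= ->; case: HE].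
  exact: cob_cups_capping_lcob HE (lcob_death b) isT (run_death b) le_i0.
- have [C HC] := balanced_capping bal.
  exists ((Cap b, i) :: C), C; split=> //.
    by split; [case: HC | rewrite /= Es; case: HC].
  rewrite cups_cons -catA.
  exact: cob_cups_capping_lcob HC (lcob_death b) isT (run_death b) le_i.
have Eo : o2 = ~~ o1 by move: npar; case: (t); case: (o1); case: (o2).
subst o2; rewrite gin_mkX in Ew0; rewrite gout_mkX in Ew.
have E0 : apply_slice w0 (Cap o1, i) = Some (x ++ y) by apply/apply_sliceP; exists x, y.
have E1 : apply_slice w (Cap (~~ o1), i) = Some (x ++ y).
  by apply/apply_sliceP; exists x, y; rewrite Ew /= negbK.
have [D HD] : exists D, capping (x ++ y) D.
  by apply: balanced_capping; rewrite -(balanced_slice E0).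
exists ((Cap o1, i) :: D), ((Cap (~~ o1), i) :: D); split.
- by split; [case: HD | rewrite /= E0; case: HD].
- by split; [case: HD | rewrite /= E1; case: HD].
have -> : count_virtual [:: (mkX t o1 (~~ o1), i)] = count_virtual (curl t o1).
  by case: (t).
rewrite cups_cons -catA.
by apply: (@cob_capped_curl t o1 i D (x ++ y) HD); rewrite size_cat Hx leq_addr.
Qed.

Definition capped_curls (p : diagram) := forall w C, run [::] p = Some w ->
  capping w C -> cob (p ++ C) (curl_pow (count_virtual p)).

Lemma capped_curls_nil : capped_curls [::].
Proof.
move=> w C [<-] HC; have /size0nil -> : size C = 0.
  by apply: double_inj; rewrite -(capping_size HC).
exact: cob_refl.
Qed.

(* Split [p ++ s ++ C] by saddles into [p] capped off and [s] capped off. *)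
Lemma capped_curls_rcons p s : capped_curls p -> ~~ parallel s -> capped_curls (rcons p s).
Proof.
move=> IH npar w C; rewrite run_rcons; case Hp: (run [::] p) => [w0|] // Es HC.
have bal0 : balanced w0 by rewrite -(balanced_run Hp).
have [E [C' [HE HC' Hs]]] := cob_capped_slice Es bal0 npar.
have Hps : run [::] (rcons p s) = Some w by rewrite run_rcons Hp.
apply: cob_trans (cob_capping_indep Hps HC HC') _.
rewrite -cats1 -catA /=.
have Hs' : run w0 (s :: C') = Some [::] by rewrite /= Es; case: HC'.
apply: cob_trans (cob_split_capping Hp HE Hs') _.
rewrite catA count_virtual_cat; apply: (cob_trans _ (cob_curl_pow_add _ _)).
apply: cob_cat (IH _ _ Hp HE) Hs _ _.
- by rewrite /valid run_cat Hp; case: HE.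
- by rewrite /valid run_cat (capping_cups HE).
Qed.

Lemma capped_curls_rcons_parallel p t o i :
  capped_curls p -> capped_curls (rcons p (mkX t o o, i)).
Proof.
move=> IH w C; rewrite run_rcons; case Hp: (run [::] p) => [w0|] // Es HC.
pose p' := rcons (rcons (rcons p (Cup (~~ o), i.+2)) (mkX (xflip t) o (~~ o), i.+1)) (Cap o, i).
have Hp' : capped_curls p'.
  apply: capped_curls_rcons => //; apply: capped_curls_rcons; last by case: (t); case: (o).
  exact: capped_curls_rcons.
have le_i : i <= size w0.
  by move/apply_sliceP: Es => [x [y [Hx -> _]]]; rewrite size_cat Hx leq_addr.
have Hrun : run w0 (shift i [:: (mkX t o o, 0)]) = Some w by rewrite /= add0n Es.
have V : valid (p ++ shift i [:: (mkX t o o, 0)] ++ C).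
  by apply/valid_catP; exists w0, w; split=> //; case: HC.
rewrite -cats1 -catA.
apply: cob_trans (lcob_cob (lcob_rotate_parallel t o) isT V) _.
have Ep' : p ++ shift i [:: (Cup (~~ o), 2); (mkX (xflip t) o (~~ o), 1); (Cap o, 0)] = p'.
  by rewrite /p' -!cats1 -!catA.
have -> : count_virtual (p ++ [:: (mkX t o o, i)]) = count_virtual p'.
  by rewrite -Ep' !count_virtual_cat; case: (t).
rewrite catA Ep'; apply: Hp' HC.
rewrite -Ep' run_cat Hp.
exact: run_sub_shift (lcob_rotate_parallel t o).1 le_i Hrun.
Qed.

Lemma capped_curls_all p : capped_curls p.
Proof.
elim/last_ind: p => [|p [g i] IH]; first exact: capped_curls_nil.
case npar: (~~ parallel (g, i)); first exact: capped_curls_rcons.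
case: (gen_cases g) npar => [[b ->] | [b ->] | [t [o1 [o2 ->]]]] //.
have -> : parallel (mkX t o1 o2, i) = (o1 == o2) by case: t.
by move=> /negbFE /eqP <-; apply: capped_curls_rcons_parallel.
Qed.

Theorem mainTheorem2 (L : diagram) :
  valid L -> (bounds_rv_surface L <-> ~~ odd (count_virtual L)).
Proof.
move=> HL; split=> [/cob_odd -> // | even_L].
have capping_nil : capping [::] [::] by [].
by have := capped_curls_all HL capping_nil; rewrite cats0 /curl_pow (negbTE even_L).
Qed.
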